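(* Fix $m\in\mathbb N$ and $\xi\in\mathbb R^m$, and let $\rho=\sqrt{\log m+1}\,\|\xi\|$. For every integer $k\geq1$ with $k\geq 2m\rho$, $$\Big|\big(\widehat{e^{2\operatorname{Im}g_+}}\big)_k\Big|\leq 2e^{\rho}\frac{\rho^{\lceil k/m\rceil}}{\lceil k/m\rceil!}.$$
   Context: $g_+(\theta)=\sum_{j=1}^m\frac{\xi_j}{\sqrt j}e^{ij\theta}$, so $\operatorname{Im}g_+(\theta)=\sum_{j=1}^m\frac{\xi_j}{\sqrt j}\sin j\theta$. For a function $c$ on $[-\pi,\pi]$, $\hat c_k=\frac1{2\pi}\int_{-\pi}^{\pi}c(\theta)e^{-ik\theta}d\theta$. $\log$ is natural. *)

From Stdlib Require Import Reals Factorial.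
From Coquelicot Require Import Coquelicot.
Open Scope R_scope.

(* xi : nat -> R, only the entries xi 1, ..., xi m are used (xi in R^m). *)

Definition xi_norm (m : nat) (xi : nat -> R) : R :=
  match m with
  | O => 0
  | S m' => sqrt (sum_f_R0 (fun i => (xi (S i)) ^ 2) m')
  end.

Definition Im_gplus (m : nat) (xi : nat -> R) (theta : R) : R :=
  match m with
  | O => 0
  | S m' => sum_f_R0 (fun i => xi (S i) / sqrt (INR (S i)) * sin (INR (S i) * theta)) m'
  end.

Definition cexpi (t : R) : C := (cos t, sin t).

Definition fourier_coef (c : R -> R) (k : Z) : C :=
  Cmult (RtoC (/ (2 * PI)))
    (RInt (V := C_R_CompleteNormedModule)
       (fun theta => Cmult (RtoC (c theta)) (cexpi (- (IZR k) * theta))) (- PI) PI).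

Definition ceil_div (k m : nat) : nat := ((k + m - 1) / m)%nat.

From Stdlib Require Import Reals Factorial Lia Lra ZArith List.
From Coquelicot Require Import Coquelicot.
Open Scope R_scope.

(* Write m = m' + 1, c_j = xi_j / sqrt j, and split 2 Im g_+ = A + B with
     A(t) = sum_j (-i c_j) e^{ijt}   (frequencies 1..m),
     B(t) = sum_j ( i c_j) e^{-ijt}  (frequencies -m..-1),
   so |A|, |B| <= sum_j |c_j| <= rho by Cauchy-Schwarz and sum_j 1/j <= log m + 1.
   By the binomial formula, the degree-M Taylor polynomial of exp at A + B is
   sum_{a+b <= M} A^a/a! B^b/b!.  With N = ceil(k/m), the terms with a < N are
   trigonometric polynomials of top frequency a*m <= k - 1, hence have vanishing
   k-th Fourier coefficient; the terms with a >= N have modulus at most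
   (sum_{a >= N} rho^a/a!) e^rho <= 2 e^rho rho^N/N! because 2 rho <= N; and the
   Taylor remainder is at most e^{2 rho} - sum_{n <= M} (2 rho)^n/n!, which tends
   to 0 as M grows. *)

(* Finite sums of complex numbers are Coquelicot's [sum_n] on [C]; these
   restatements fix the carrier to [C] so that [ring] applies to the results. *)

Lemma sum_n_C_shift (f : nat -> C) n :
  sum_n f (S n) = Cplus (f O) (sum_n (fun i => f (S i)) n).
Proof. unfold sum_n. rewrite sum_Sn_m, sum_n_m_S by lia. reflexivity. Qed.

Lemma sum_n_C_last (f : nat -> C) n : sum_n f (S n) = Cplus (sum_n f n) (f (S n)).
Proof. exact (sum_Sn (G := C_AbelianMonoid) f n). Qed.

Lemma sum_n_C_plus (f g : nat -> C) n :
  sum_n (fun i => Cplus (f i) (g i)) n = Cplus (sum_n f n) (sum_n g n).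
Proof. exact (sum_n_plus (G := C_AbelianMonoid) f g n). Qed.

Lemma sum_n_C_mult_l (c : C) (f : nat -> C) n :
  sum_n (fun i => Cmult c (f i)) n = Cmult c (sum_n f n).
Proof. exact (sum_n_mult_l (K := C_Ring) c f n). Qed.

Lemma sum_n_C_ext (f g : nat -> C) n :
  (forall i, (i <= n)%nat -> f i = g i) -> sum_n f n = sum_n g n.
Proof. exact (sum_n_ext_loc (G := C_AbelianMonoid) f g n). Qed.

Lemma Cmod_sum_n (f : nat -> C) n : Cmod (sum_n f n) <= sum_f_R0 (fun i => Cmod (f i)) n.
Proof. rewrite <- sum_n_Reals. apply (norm_sum_n_m (V := C_NormedModule)). Qed.

Lemma RtoC_sum_f_R0 (f : nat -> R) n : RtoC (sum_f_R0 f n) = sum_n (fun i => RtoC (f i)) n.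
Proof.
  induction n as [|n IH]; [now rewrite sum_O|].
  rewrite sum_n_C_last, <- IH. apply RtoC_plus.
Qed.

Definition exp_coef (x : R) (n : nat) : R := x ^ n / INR (fact n).

Definition exp_partial (x : R) (M : nat) : R := sum_f_R0 (exp_coef x) M.

Lemma exp_coef_nonneg r n : 0 <= r -> 0 <= exp_coef r n.
Proof.
  intros Hr. unfold exp_coef. apply Rmult_le_pos; [apply pow_le, Hr|].
  apply Rlt_le, Rinv_0_lt_compat, INR_fact_lt_0.
Qed.

Lemma Rabs_exp_coef x r n : Rabs x <= r -> Rabs (exp_coef x n) <= exp_coef r n.
Proof.
  intros Hx. unfold exp_coef, Rdiv.
  rewrite Rabs_mult, <- RPow_abs, Rabs_inv, (Rabs_right (INR (fact n))) by apply Rle_ge, pos_INR.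
  apply Rmult_le_compat_r; [apply Rlt_le, Rinv_0_lt_compat, INR_fact_lt_0|].
  apply pow_incr. split; [apply Rabs_pos | exact Hx].
Qed.

Lemma exp_partial_lim x : is_lim_seq (exp_partial x) (exp x).
Proof.
  eapply is_lim_seq_ext; [|exact (is_exp_Reals x)]. intros M.
  unfold exp_partial. rewrite sum_n_Reals. apply sum_eq. intros n _.
  rewrite pow_n_pow. unfold exp_coef, scal; simpl. unfold mult; simpl. unfold Rdiv. ring.
Qed.

Lemma exp_partial_le_exp r M : 0 <= r -> exp_partial r M <= exp r.
Proof.
  intros Hr. apply (is_lim_seq_incr_compare (exp_partial r)); [apply exp_partial_lim|].
  intros n. unfold exp_partial. simpl. pose proof (exp_coef_nonneg r (S n) Hr). lra.
Qed.

Lemma exp_remainder_lim r : is_lim_seq (fun M => exp r - exp_partial r M) 0.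
Proof.
  replace 0 with (exp r - exp r) by ring.
  apply (is_lim_seq_minus _ _ (exp r) (exp r)); [apply is_lim_seq_const | apply exp_partial_lim | reflexivity].
Qed.

Lemma exp_partial_diff_bound x r M d : Rabs x <= r ->
  Rabs (exp_partial x (M + d) - exp_partial x M) <= exp_partial r (M + d) - exp_partial r M.
Proof.
  intros Hx. induction d as [|d IH].
  - rewrite Nat.add_0_r, !Rminus_diag, Rabs_R0. lra.
  - rewrite Nat.add_succ_r. unfold exp_partial in *. simpl sum_f_R0.
    pose proof (Rabs_exp_coef x r (S (M + d)) Hx) as Hterm.
    pose proof (Rabs_triang (sum_f_R0 (exp_coef x) (M + d) - sum_f_R0 (exp_coef x) M)
                            (exp_coef x (S (M + d)))) as Htri.
    replace (sum_f_R0 (exp_coef x) (M + d) + exp_coef x (S (M + d)) - sum_f_R0 (exp_coef x) M)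
      with (sum_f_R0 (exp_coef x) (M + d) - sum_f_R0 (exp_coef x) M + exp_coef x (S (M + d)))
      by ring.
    lra.
Qed.

Lemma exp_remainder_bound x r M : Rabs x <= r ->
  Rabs (exp x - exp_partial x M) <= exp r - exp_partial r M.
Proof.
  intros Hx.
  assert (Lx : is_lim_seq (fun K => Rabs (exp_partial x K - exp_partial x M)) (Rabs (exp x - exp_partial x M))).
  { apply (is_lim_seq_abs _ (Finite (exp x - exp_partial x M))).
    apply (is_lim_seq_minus _ _ (exp x) (exp_partial x M));
      [apply exp_partial_lim | apply is_lim_seq_const | reflexivity]. }
  assert (Lr : is_lim_seq (fun K => exp_partial r K - exp_partial r M) (exp r - exp_partial r M)).
  { apply (is_lim_seq_minus _ _ (exp r) (exp_partial r M));
      [apply exp_partial_lim | apply is_lim_seq_const | reflexivity]. }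
  refine (is_lim_seq_le_loc _ _ _ _ _ Lx Lr).
  exists M. intros K HK. replace K with (M + (K - M))%nat by lia. apply exp_partial_diff_bound, Hx.
Qed.

Lemma exp_coef_halves r p : 0 <= r -> 2 * r <= INR (S p) ->
  2 * exp_coef r (S p) <= exp_coef r p.
Proof.
  intros Hr Hp. assert (Hpos : 0 < INR (S p)) by (apply lt_0_INR; lia).
  assert (E : exp_coef r (S p) = exp_coef r p * r / INR (S p)).
  { unfold exp_coef. rewrite fact_simpl, mult_INR. simpl pow. field.
    split; [apply INR_fact_neq_0 | lra]. }
  rewrite E. pose proof (exp_coef_nonneg r p Hr).
  apply Rmult_le_reg_r with (INR (S p)); [exact Hpos|].
  unfold Rdiv. rewrite Rmult_assoc, (Rmult_assoc _ (/ _)), Rinv_l by lra. nra.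
Qed.

Lemma exp_coef_tail_telescope r N M : 0 <= r -> 2 * r <= INR N ->
  sum_f_R0 (fun p => if (N <=? p)%nat then exp_coef r p else 0) M
  <= 2 * exp_coef r N - 2 * exp_coef r (Nat.max N (S M)).
Proof.
  intros Hr HN.
  assert (Hhalf : forall p, (N <= S p)%nat -> 2 * exp_coef r (S p) <= exp_coef r p).
  { intros p Hp. apply exp_coef_halves; [exact Hr|]. apply le_INR in Hp. lra. }
  induction M as [|M IH]; simpl sum_f_R0.
  - destruct (Nat.leb_spec N 0) as [H0|H0].
    + replace N with 0%nat by lia. rewrite Nat.max_r by lia.
      pose proof (Hhalf 0%nat ltac:(lia)). lra.
    + rewrite Nat.max_l by lia. lra.
  - destruct (Nat.leb_spec N (S M)) as [H1|H1].
    + rewrite Nat.max_r in * by lia. pose proof (Hhalf (S M) ltac:(lia)). lra.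
    + rewrite Nat.max_l in * by lia. lra.
Qed.

Lemma exp_coef_tail r N M : 0 <= r -> 2 * r <= INR N ->
  sum_f_R0 (fun p => if (N <=? p)%nat then exp_coef r p else 0) M <= 2 * exp_coef r N.
Proof.
  intros Hr HN. pose proof (exp_coef_tail_telescope r N M Hr HN).
  pose proof (exp_coef_nonneg r (Nat.max N (S M)) Hr). lra.
Qed.

Lemma sum_triangle_le_square (f g : nat -> R) M :
  (forall i, 0 <= f i) -> (forall i, 0 <= g i) ->
  sum_f_R0 (fun n => sum_f_R0 (fun a => f a * g (n - a)%nat) n) M
  <= sum_f_R0 f M * sum_f_R0 g M.
Proof.
  intros Hf Hg. destruct M as [|M]; [simpl; lra|].
  rewrite (cauchy_finite f g (S M)) by lia.
  assert (Hrest : 0 <= sum_f_R0 (fun k => sum_f_R0 (fun l => f (S (l + k)) * g (S M - l)%nat)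
                                          (Init.Nat.pred (S M - k))) (Init.Nat.pred (S M))).
  { apply cond_pos_sum. intros k. apply cond_pos_sum. intros l. apply Rmult_le_pos; auto. }
  lra.
Qed.

Definition exp_term (z : C) (n : nat) : C := Cmult (RtoC (/ INR (fact n))) (Cpow z n).

Lemma exp_term_S (z : C) n :
  Cmult (RtoC (INR (S n))) (exp_term z (S n)) = Cmult z (exp_term z n).
Proof.
  unfold exp_term. simpl Cpow.
  assert (E : INR (S n) * / INR (fact (S n)) = / INR (fact n)).
  { rewrite fact_simpl, mult_INR. field. split; [apply INR_fact_neq_0 | apply not_0_INR; lia]. }
  rewrite <- E, RtoC_mult. ring.
Qed.

Definition binom_sum (A B : C) (n : nat) : C :=
  sum_n (fun a => Cmult (exp_term A a) (exp_term B (n - a))) n.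

(* The convolution satisfies the same recurrence as the terms at A + B. *)
Lemma binom_sum_S (A B : C) n :
  Cmult (RtoC (INR (S n))) (binom_sum A B (S n)) = Cmult (Cplus A B) (binom_sum A B n).
Proof.
  unfold binom_sum. rewrite <- sum_n_C_mult_l.
  rewrite (sum_n_C_ext _ (fun a =>
      Cplus (Cmult (Cmult (RtoC (INR a)) (exp_term A a)) (exp_term B (S n - a)))
            (Cmult (exp_term A a) (Cmult (RtoC (INR (S n - a))) (exp_term B (S n - a)))))).
  2:{ intros a Ha. replace (INR (S n)) with (INR a + INR (S n - a))
        by (rewrite <- plus_INR; f_equal; lia).
      rewrite RtoC_plus. ring. }
  rewrite sum_n_C_plus, Cmult_plus_distr_r. f_equal.
  - rewrite sum_n_C_shift. simpl (INR 0). rewrite Cmult_0_l, Cmult_0_l, Cplus_0_l.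
    rewrite <- sum_n_C_mult_l. apply sum_n_C_ext. intros a _.
    rewrite exp_term_S. replace (S n - S a)%nat with (n - a)%nat by lia. ring.
  - rewrite sum_n_C_last, Nat.sub_diag. simpl (INR 0).
    rewrite Cmult_0_l, Cmult_0_r, Cplus_0_r.
    rewrite <- sum_n_C_mult_l. apply sum_n_C_ext. intros a Ha.
    replace (S n - a)%nat with (S (n - a)) by lia. rewrite exp_term_S. ring.
Qed.

Lemma exp_term_add (A B : C) n : exp_term (Cplus A B) n = binom_sum A B n.
Proof.
  induction n as [|n IH].
  - unfold binom_sum, exp_term. rewrite sum_O. simpl. rewrite Rinv_1. ring.
  - assert (Hn : RtoC (INR (S n)) <> RtoC 0).
    { intro E. apply RtoC_inj in E. apply (not_0_INR (S n)); [lia | exact E]. }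
    assert (E := binom_sum_S A B n). rewrite <- IH, <- exp_term_S in E.
    apply (f_equal (Cmult (/ RtoC (INR (S n))))) in E.
    rewrite !Cmult_assoc, Cinv_l, !Cmult_1_l in E by exact Hn.
    symmetry. exact E.
Qed.

Lemma exp_term_RtoC x n : exp_term (RtoC x) n = RtoC (exp_coef x n).
Proof.
  unfold exp_term, exp_coef, Rdiv. rewrite Rmult_comm, RtoC_mult. f_equal.
  induction n as [|n IH]; [reflexivity|]. simpl. rewrite IH, RtoC_mult. reflexivity.
Qed.

Lemma Cmod_exp_term z r n : Cmod z <= r -> Cmod (exp_term z n) <= exp_coef r n.
Proof.
  intros Hz. unfold exp_term.
  assert (Hpow : Cmod (Cpow z n) = Cmod z ^ n).
  { induction n as [|n IH]; simpl; [apply Cmod_1 | rewrite Cmod_mult, IH; reflexivity]. }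
  rewrite Cmod_mult, Cmod_R, Hpow, Rabs_right, Rmult_comm
    by apply Rle_ge, Rlt_le, Rinv_0_lt_compat, INR_fact_lt_0.
  apply Rmult_le_compat_r; [apply Rlt_le, Rinv_0_lt_compat, INR_fact_lt_0|].
  apply pow_incr. split; [apply Cmod_ge_0 | exact Hz].
Qed.

Definition binom_part (P : nat -> bool) (A B : C) (M : nat) : C :=
  sum_n (fun n => sum_n (fun a =>
    if P a then Cmult (exp_term A a) (exp_term B (n - a)) else RtoC 0) n) M.

Lemma binom_part_split P A B M :
  Cplus (binom_part P A B M) (binom_part (fun a => negb (P a)) A B M)
  = sum_n (exp_term (Cplus A B)) M.
Proof.
  unfold binom_part. rewrite <- sum_n_C_plus. apply sum_n_C_ext. intros n _.
  rewrite exp_term_add. unfold binom_sum. rewrite <- sum_n_C_plus. apply sum_n_C_ext. intros a _.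
  destruct (P a); simpl; ring.
Qed.

Lemma binom_part_bound P A B M r : Cmod A <= r -> Cmod B <= r ->
  Cmod (binom_part P A B M)
  <= sum_f_R0 (fun a => if P a then exp_coef r a else 0) M * exp r.
Proof.
  intros HA HB. assert (Hr : 0 <= r) by (eapply Rle_trans; [apply Cmod_ge_0 | exact HA]).
  unfold binom_part. eapply Rle_trans; [apply Cmod_sum_n|].
  eapply Rle_trans.
  { apply sum_Rle. intros n _. eapply Rle_trans; [apply Cmod_sum_n|].
    apply sum_Rle. intros a _.
    instantiate (1 := fun a => (if P a then exp_coef r a else 0) * exp_coef r (n - a)).
    cbv beta. destruct (P a).
    - rewrite Cmod_mult. apply Rmult_le_compat; try apply Cmod_ge_0; apply Cmod_exp_term; assumption.
    - rewrite Cmod_0. lra. }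
  eapply Rle_trans; [apply sum_triangle_le_square|].
  - intros a. destruct (P a); [apply exp_coef_nonneg, Hr | lra].
  - intros a. apply exp_coef_nonneg, Hr.
  - apply Rmult_le_compat_l; [|apply exp_partial_le_exp, Hr].
    apply cond_pos_sum. intros a. destruct (P a); [apply exp_coef_nonneg, Hr | lra].
Qed.

Lemma exp_split_binom_part P (A B : C) x M : Cplus A B = RtoC x ->
  Cminus (RtoC (exp x)) (binom_part P A B M)
  = Cplus (binom_part (fun a => negb (P a)) A B M) (RtoC (exp x - exp_partial x M)).
Proof.
  intros HAB.
  assert (E : RtoC (exp_partial x M) = sum_n (exp_term (Cplus A B)) M).
  { unfold exp_partial. rewrite RtoC_sum_f_R0, HAB.
    apply sum_n_C_ext. intros n _. rewrite exp_term_RtoC. reflexivity. }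
  rewrite <- (binom_part_split P) in E. rewrite RtoC_minus, E. ring.
Qed.

Lemma cexpi_add a b : cexpi (a + b) = Cmult (cexpi a) (cexpi b).
Proof. unfold cexpi. rewrite cos_plus, sin_plus. apply injective_projections; simpl; ring. Qed.

Lemma cexpi_0 : cexpi 0 = RtoC 1.
Proof. unfold cexpi. rewrite cos_0, sin_0. reflexivity. Qed.

Lemma Cmod_cexpi t : Cmod (cexpi t) = 1.
Proof.
  unfold Cmod, cexpi; simpl. rewrite !Rmult_1_r, Rplus_comm.
  change (sqrt ((sin t)² + (cos t)²) = 1). rewrite sin2_cos2. apply sqrt_1.
Qed.

(* The trigonometric polynomial sum c e^{izt} given by its list of
   (coefficient, frequency) pairs. *)
Definition trig_eval (l : list (C * Z)) (t : R) : C :=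
  fold_right (fun p acc => Cplus (Cmult (fst p) (cexpi (IZR (snd p) * t))) acc) (RtoC 0) l.

Definition trig_mul (l1 l2 : list (C * Z)) : list (C * Z) :=
  flat_map (fun p => map (fun q => (Cmult (fst p) (fst q), (snd p + snd q)%Z)) l2) l1.

Lemma trig_eval_app l1 l2 t : trig_eval (l1 ++ l2) t = Cplus (trig_eval l1 t) (trig_eval l2 t).
Proof. induction l1 as [|p l1 IH]; simpl; [ring|]. unfold trig_eval in *; simpl. rewrite IH. ring. Qed.

Lemma trig_eval_mul l1 l2 t : trig_eval (trig_mul l1 l2) t = Cmult (trig_eval l1 t) (trig_eval l2 t).
Proof.
  assert (Hmap : forall c z, trig_eval (map (fun q => (Cmult c (fst q), (z + snd q)%Z)) l2) t
                             = Cmult (Cmult c (cexpi (IZR z * t))) (trig_eval l2 t)).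
  { intros c z. induction l2 as [|q l2 IH]; simpl; [ring|]. unfold trig_eval in *; simpl.
    rewrite IH, plus_IZR, Rmult_plus_distr_r, cexpi_add. ring. }
  induction l1 as [|p l1 IH]; simpl; [ring|].
  unfold trig_mul in *; simpl. rewrite trig_eval_app, IH, Hmap. simpl. ring.
Qed.

Definition spectrum_le (H : Z) (f : R -> C) : Prop :=
  exists l, List.Forall (fun p => (snd p <= H)%Z) l /\ forall t, f t = trig_eval l t.

Lemma spectrum_le_ext H f g : (forall t, f t = g t) -> spectrum_le H f -> spectrum_le H g.
Proof. intros E [l [F G]]. exists l. split; [exact F|]. intros t. rewrite <- E. apply G. Qed.

Lemma spectrum_le_mono H H' f : (H <= H')%Z -> spectrum_le H f -> spectrum_le H' f.
Proof.
  intros Hle [l [F G]]. exists l. split; [|exact G].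
  eapply List.Forall_impl; [|exact F]. simpl; intros; lia.
Qed.

Lemma spectrum_le_zero H : spectrum_le H (fun _ => RtoC 0).
Proof. exists nil. split; auto. Qed.

Lemma spectrum_le_monomial c z : spectrum_le z (fun t => Cmult c (cexpi (IZR z * t))).
Proof. exists ((c, z) :: nil). split; [constructor; simpl; auto; lia|]. intros t. unfold trig_eval; simpl; ring. Qed.

Lemma spectrum_le_const c : spectrum_le 0 (fun _ => c).
Proof.
  eapply spectrum_le_ext; [|apply (spectrum_le_monomial c 0)].
  intros t. simpl. rewrite Rmult_0_l, cexpi_0. ring.
Qed.

Lemma spectrum_le_plus H f g :
  spectrum_le H f -> spectrum_le H g -> spectrum_le H (fun t => Cplus (f t) (g t)).
Proof.
  intros [l1 [F1 G1]] [l2 [F2 G2]]. exists (l1 ++ l2). split.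
  - apply List.Forall_app; auto.
  - intros t. rewrite trig_eval_app, G1, G2. reflexivity.
Qed.

Lemma spectrum_le_mult H1 H2 f g :
  spectrum_le H1 f -> spectrum_le H2 g -> spectrum_le (H1 + H2) (fun t => Cmult (f t) (g t)).
Proof.
  intros [l1 [F1 G1]] [l2 [F2 G2]]. exists (trig_mul l1 l2). split.
  - apply List.Forall_flat_map. eapply List.Forall_impl; [|exact F1]. intros p Hp.
    apply List.Forall_map. eapply List.Forall_impl; [|exact F2]. intros q Hq. simpl in *. lia.
  - intros t. rewrite trig_eval_mul, G1, G2. reflexivity.
Qed.

Lemma spectrum_le_sum_n H (f : nat -> R -> C) n :
  (forall i, (i <= n)%nat -> spectrum_le H (f i)) -> spectrum_le H (fun t => sum_n (fun i => f i t) n).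
Proof.
  induction n as [|n IH]; intros Hf.
  - eapply spectrum_le_ext; [|apply (Hf O (le_n O))]. intros t. now rewrite sum_O.
  - eapply spectrum_le_ext; [intros t; symmetry; apply sum_n_C_last|].
    apply spectrum_le_plus; [apply IH; intros i Hi|]; apply Hf; lia.
Qed.

Lemma spectrum_le_pow H f n :
  spectrum_le H f -> spectrum_le (Z.of_nat n * H) (fun t => Cpow (f t) n).
Proof.
  intros Hf. induction n as [|n IH]; [exact (spectrum_le_const (RtoC 1))|].
  replace (Z.of_nat (S n) * H)%Z with (H + Z.of_nat n * H)%Z by lia.
  apply (spectrum_le_mult _ _ f (fun t => Cpow (f t) n)); assumption.
Qed.

Lemma spectrum_le_exp_term H f n :
  spectrum_le H f -> spectrum_le (Z.of_nat n * H) (fun t => exp_term (f t) n).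
Proof.
  intros Hf. replace (Z.of_nat n * H)%Z with (0 + Z.of_nat n * H)%Z by lia.
  apply (spectrum_le_mult _ _ (fun _ => _) (fun t => Cpow (f t) n));
    [apply spectrum_le_const | apply spectrum_le_pow, Hf].
Qed.

Lemma binom_part_spectrum P HA H (A B : R -> C) M :
  spectrum_le HA A -> spectrum_le 0 B ->
  (forall a, P a = true -> (Z.of_nat a * HA <= H)%Z) ->
  spectrum_le H (fun t => binom_part P (A t) (B t) M).
Proof.
  intros SA SB HP. unfold binom_part.
  apply (spectrum_le_sum_n H (fun n t => sum_n (fun a => if P a then _ else _) n)). intros n _.
  apply (spectrum_le_sum_n H (fun a t => if P a then _ else _)). intros a _.
  destruct (P a) eqn:Pa; [|apply spectrum_le_zero].
  apply (spectrum_le_mono (Z.of_nat a * HA + Z.of_nat (n - a) * 0)); [specialize (HP a Pa); lia|].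
  apply (spectrum_le_mult _ _ (fun t => exp_term (A t) a) (fun t => exp_term (B t) (n - a)));
    apply spectrum_le_exp_term; assumption.
Qed.

Lemma is_RInt_C (g : R -> C) a b u v :
  is_RInt (fun t => fst (g t)) a b u -> is_RInt (fun t => snd (g t)) a b v ->
  is_RInt (V := C_R_CompleteNormedModule) g a b (u, v).
Proof. apply (is_RInt_fct_extend_pair (U := R_NormedModule) (V := R_NormedModule)). Qed.

Lemma is_RInt_cos_sin (z : Z) (p q : R) : z <> 0%Z ->
  is_RInt (fun t => p * cos (IZR z * t) + q * sin (IZR z * t)) (- PI) PI 0.
Proof.
  intros Hz. assert (Hz' : IZR z <> 0) by (apply not_0_IZR; exact Hz).
  set (F := fun t => (p * sin (IZR z * t) - q * cos (IZR z * t)) / IZR z).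
  assert (Hsin : sin (IZR z * PI) = 0) by (apply sin_eq_0_1; exists z; reflexivity).
  assert (E : minus (F PI) (F (- PI)) = 0).
  { unfold F, minus, plus, opp; simpl. replace (IZR z * - PI) with (- (IZR z * PI)) by ring.
    rewrite sin_neg, cos_neg, Hsin. field. exact Hz'. }
  rewrite <- E. apply (is_RInt_derive (V := R_CompleteNormedModule) F).
  - intros x _. unfold F. auto_derive; [exact I|]. field. exact Hz'.
  - intros x _. apply continuity_pt_filterlim. apply derivable_continuous_pt. reg.
Qed.

Lemma is_RInt_monomial (c : C) (z : Z) : z <> 0%Z ->
  is_RInt (V := C_R_CompleteNormedModule) (fun t => Cmult c (cexpi (IZR z * t))) (- PI) PI (RtoC 0).
Proof.
  intros Hz. apply is_RInt_C.
  - eapply is_RInt_ext; [|apply (is_RInt_cos_sin z (fst c) (- snd c) Hz)]. intros x _. simpl. ring.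
  - eapply is_RInt_ext; [|apply (is_RInt_cos_sin z (snd c) (fst c) Hz)]. intros x _. simpl. ring.
Qed.

Lemma is_RInt_spectrum_neg H f : (H <= -1)%Z -> spectrum_le H f ->
  is_RInt (V := C_R_CompleteNormedModule) f (- PI) PI (RtoC 0).
Proof.
  intros HH [l [F G]]. apply (is_RInt_ext (fun t => trig_eval l t)); [intros t _; symmetry; apply G|].
  clear G. induction l as [|p l IH].
  - assert (E : scal (PI - - PI) (RtoC 0) = RtoC 0)
      by (apply injective_projections; simpl; unfold scal; simpl; unfold mult; simpl; ring).
    rewrite <- E. apply (is_RInt_const (V := C_R_CompleteNormedModule)).
  - inversion_clear F as [|? ? Hp Hl]. simpl in Hp.
    replace (RtoC 0) with (plus (RtoC 0) (RtoC 0)) by (apply injective_projections; simpl; ring).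
    apply (is_RInt_plus (V := C_R_CompleteNormedModule)); [apply is_RInt_monomial; lia | exact (IH Hl)].
Qed.

Lemma ex_RInt_fourier_integrand (c : R -> R) (z : Z) : (forall t, continuity_pt c t) ->
  ex_RInt (V := C_R_CompleteNormedModule)
    (fun t => Cmult (RtoC (c t)) (cexpi (- IZR z * t))) (- PI) PI.
Proof.
  intros Hc. exists (RInt (fun t => c t * cos (- IZR z * t)) (- PI) PI,
                     RInt (fun t => c t * sin (- IZR z * t)) (- PI) PI).
  apply is_RInt_C; simpl.
  - apply (is_RInt_ext (fun t => c t * cos (- IZR z * t))); [intros t _; simpl; ring|].
    apply (RInt_correct (V := R_CompleteNormedModule)), (ex_RInt_continuous (V := R_CompleteNormedModule)). intros t _.
    apply continuity_pt_filterlim, (continuity_pt_mult c (fun t => cos (- IZR z * t))); [apply Hc | reg].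
  - apply (is_RInt_ext (fun t => c t * sin (- IZR z * t))); [intros t _; simpl; ring|].
    apply (RInt_correct (V := R_CompleteNormedModule)), (ex_RInt_continuous (V := R_CompleteNormedModule)). intros t _.
    apply continuity_pt_filterlim, (continuity_pt_mult c (fun t => sin (- IZR z * t))); [apply Hc | reg].
Qed.

Lemma norm_C_R_Cmod (z : C) : @norm R_AbsRing C_R_NormedModule z = Cmod z.
Proof.
  destruct z as [a b]. unfold Cmod, norm; simpl. unfold prod_norm, norm; simpl. unfold abs; simpl.
  rewrite !Rmult_1_r, <- !Rabs_mult, !Rabs_right by apply Rle_ge, Rle_0_sqr. reflexivity.
Qed.

Lemma fourier_coef_le (c : R -> R) (g : R -> C) (k : Z) (K : R) :
  (forall t, continuity_pt c t) -> spectrum_le (k - 1) g ->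
  (forall t, Cmod (Cminus (RtoC (c t)) (g t)) <= K) ->
  Cmod (fourier_coef c k) <= K.
Proof.
  intros Hc Sg Hbound. unfold fourier_coef.
  set (I := RInt (V := C_R_CompleteNormedModule)
              (fun t => Cmult (RtoC (c t)) (cexpi (- IZR k * t))) (- PI) PI).
  assert (Ic : is_RInt (V := C_R_CompleteNormedModule)
                 (fun t => Cmult (RtoC (c t)) (cexpi (- IZR k * t))) (- PI) PI I)
    by (apply RInt_correct, ex_RInt_fourier_integrand, Hc).
  clearbody I.
  assert (Ig : is_RInt (V := C_R_CompleteNormedModule)
                 (fun t => Cmult (g t) (cexpi (- IZR k * t))) (- PI) PI (RtoC 0)).
  { apply (is_RInt_spectrum_neg (k - 1 + - k)); [lia|].
    apply spectrum_le_mult; [exact Sg|].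
    eapply spectrum_le_ext; [|apply (spectrum_le_monomial (RtoC 1) (- k))].
    intros t. rewrite opp_IZR. ring. }
  assert (Idiff : is_RInt (V := C_R_CompleteNormedModule)
                    (fun t => Cmult (Cminus (RtoC (c t)) (g t)) (cexpi (- IZR k * t))) (- PI) PI I).
  { assert (E : minus I (RtoC 0) = I) by (change (Cminus I (RtoC 0) = I); ring).
    rewrite <- E.
    apply (is_RInt_ext (fun t => minus (Cmult (RtoC (c t)) (cexpi (- IZR k * t)))
                                       (Cmult (g t) (cexpi (- IZR k * t))))).
    - intros t _. change (Cminus (Cmult (RtoC (c t)) (cexpi (- IZR k * t)))
                                 (Cmult (g t) (cexpi (- IZR k * t)))
                         = Cmult (Cminus (RtoC (c t)) (g t)) (cexpi (- IZR k * t))). ring.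
    - apply (is_RInt_minus (V := C_R_CompleteNormedModule)); assumption. }
  assert (Hpi : 0 < PI) by apply PI_RGT_0.
  assert (HI : Cmod I <= (PI - - PI) * K).
  { rewrite <- norm_C_R_Cmod.
    refine (norm_RInt_le_const _ _ _ _ _ _ _ Idiff); [lra|]. intros t _.
    rewrite norm_C_R_Cmod, Cmod_mult, Cmod_cexpi, Rmult_1_r. apply Hbound. }
  rewrite Cmod_mult, Cmod_R, Rabs_right by (apply Rle_ge, Rlt_le, Rinv_0_lt_compat; lra).
  apply Rmult_le_reg_l with (2 * PI); [lra|].
  rewrite <- Rmult_assoc, Rinv_r, Rmult_1_l by lra. lra.
Qed.

Lemma cauchy_schwarz_step X x P p Q q :
  0 <= X -> 0 <= x -> 0 <= P -> 0 <= p -> 0 <= Q -> 0 <= q ->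
  X² <= P * Q -> x² = p * q -> (X + x)² <= (P + p) * (Q + q).
Proof.
  intros HX Hx HP Hp HQ Hq HXPQ Hxpq. unfold Rsqr in *.
  assert (Hcross : 2 * X * x <= P * q + p * Q).
  { apply Rsqr_incr_0_var;
      [|apply Rplus_le_le_0_compat; apply Rmult_le_pos; assumption].
    unfold Rsqr.
    assert (H4 : X * X * (x * x) <= P * Q * (p * q)).
    { rewrite <- Hxpq. apply Rmult_le_compat_r; [nra | exact HXPQ]. }
    replace (2 * X * x * (2 * X * x)) with (4 * (X * X * (x * x))) by ring.
    replace ((P * q + p * Q) * (P * q + p * Q))
      with ((P * q - p * Q) * (P * q - p * Q) + 4 * (P * Q * (p * q))) by ring.
    pose proof (Rle_0_sqr (P * q - p * Q)). unfold Rsqr in *. lra. }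
  nra.
Qed.

Lemma cauchy_schwarz (a b : nat -> R) n :
  (sum_f_R0 (fun i => Rabs (a i * b i)) n)²
  <= sum_f_R0 (fun i => (a i)²) n * sum_f_R0 (fun i => (b i)²) n.
Proof.
  assert (Hsq : forall i, (Rabs (a i * b i))² = (a i)² * (b i)²).
  { intros i. rewrite <- Rsqr_abs. apply Rsqr_mult. }
  induction n as [|n IH]; simpl.
  - rewrite Hsq. lra.
  - apply cauchy_schwarz_step; try apply Rle_0_sqr; try apply Rabs_pos; auto;
      apply cond_pos_sum; intros; try apply Rabs_pos; apply Rle_0_sqr.
Qed.

(* Harmonic sums: sum_{j <= n+1} 1/j <= log (n+1) + 1, from log y <= y - 1. *)
Lemma harmonic_le_ln n : sum_f_R0 (fun i => / INR (S i)) n <= ln (INR (S n)) + 1.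
Proof.
  induction n as [|n IH].
  - simpl. rewrite ln_1, Rinv_1. lra.
  - rewrite tech5. assert (Ha : 0 < INR (S n)) by (apply lt_0_INR; lia).
    assert (E : INR (S (S n)) = INR (S n) + 1) by apply S_INR.
    assert (Hb : 0 < INR (S (S n))) by lra.
    assert (Hln : ln (INR (S n) / INR (S (S n))) <= INR (S n) / INR (S (S n)) - 1).
    { rewrite <- (ln_exp (_ - 1)). apply ln_le; [apply Rdiv_lt_0_compat; lra|].
      pose proof (exp_ineq1_le (INR (S n) / INR (S (S n)) - 1)). lra. }
    rewrite ln_div in Hln by lra.
    assert (E2 : INR (S n) / INR (S (S n)) - 1 = - / INR (S (S n))) by (rewrite E; field; lra).
    lra.
Qed.

Definition gcoef (xi : nat -> R) (i : nat) : R := xi (S i) / sqrt (INR (S i)).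

Definition gcoef_l1 (m' : nat) (xi : nat -> R) : R := sum_f_R0 (fun i => Rabs (gcoef xi i)) m'.

Lemma gcoef_l1_nonneg m' xi : 0 <= gcoef_l1 m' xi.
Proof. apply cond_pos_sum. intros i. apply Rabs_pos. Qed.

Lemma gcoef_l1_bound m' xi :
  gcoef_l1 m' xi <= sqrt (ln (INR (S m')) + 1) * xi_norm (S m') xi.
Proof.
  unfold xi_norm.
  set (L := ln (INR (S m')) + 1).
  set (P := sum_f_R0 (fun i => xi (S i) ^ 2) m').
  assert (HL : 0 <= L).
  { unfold L. pose proof (ln_le 1 (INR (S m')) Rlt_0_1 (le_INR 1 (S m') ltac:(lia))) as Hln.
    rewrite ln_1 in Hln. lra. }
  assert (Hweights : sum_f_R0 (fun i => (/ sqrt (INR (S i)))²) m' <= L).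
  { eapply Rle_trans; [|apply harmonic_le_ln]. right. apply sum_eq. intros i _.
    rewrite Rsqr_inv', Rsqr_sqrt; [reflexivity | apply pos_INR]. }
  assert (HCS : (gcoef_l1 m' xi)² <= P * L).
  { replace P with (sum_f_R0 (fun i => (xi (S i))²) m')
      by (apply sum_eq; intros i _; rewrite Rsqr_pow2; reflexivity).
    eapply Rle_trans; [apply (cauchy_schwarz (fun i => xi (S i)) (fun i => / sqrt (INR (S i))))|].
    apply Rmult_le_compat_l; [apply cond_pos_sum; intros; apply Rle_0_sqr | exact Hweights]. }
  rewrite <- (sqrt_Rsqr (gcoef_l1 m' xi)) by apply gcoef_l1_nonneg.
  rewrite Rmult_comm, <- sqrt_mult_alt.
  - apply sqrt_le_1_alt. exact HCS.
  - apply cond_pos_sum. intros i. apply pow2_ge_0.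
Qed.

Definition pos_part (m' : nat) (xi : nat -> R) (t : R) : C :=
  sum_n (fun i => Cmult (0, - gcoef xi i) (cexpi (IZR (Z.of_nat (S i)) * t))) m'.

Definition neg_part (m' : nat) (xi : nat -> R) (t : R) : C :=
  sum_n (fun i => Cmult (0, gcoef xi i) (cexpi (IZR (- Z.of_nat (S i)) * t))) m'.

(* 2 Im g_+ = A + B, from 2 sin s = -i e^{is} + i e^{-is}. *)
Lemma pos_neg_part_sum m' xi t :
  Cplus (pos_part m' xi t) (neg_part m' xi t) = RtoC (2 * Im_gplus (S m') xi t).
Proof.
  unfold pos_part, neg_part, Im_gplus. rewrite <- sum_n_C_plus, RtoC_mult, RtoC_sum_f_R0.
  rewrite <- sum_n_C_mult_l. apply sum_n_C_ext. intros i _.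
  rewrite opp_IZR, <- INR_IZR_INZ. unfold gcoef, cexpi.
  replace (- INR (S i) * t) with (- (INR (S i) * t)) by ring. rewrite cos_neg, sin_neg.
  apply injective_projections; simpl; ring.
Qed.

Lemma spectrum_pos_part m' xi : spectrum_le (Z.of_nat (S m')) (pos_part m' xi).
Proof.
  apply (spectrum_le_sum_n _ (fun i t => Cmult _ (cexpi (IZR (Z.of_nat (S i)) * t)))).
  intros i Hi. eapply spectrum_le_mono; [|apply spectrum_le_monomial]. lia.
Qed.

Lemma spectrum_neg_part m' xi : spectrum_le (-1) (neg_part m' xi).
Proof.
  apply (spectrum_le_sum_n _ (fun i t => Cmult _ (cexpi (IZR (- Z.of_nat (S i)) * t)))).
  intros i _. eapply spectrum_le_mono; [|apply spectrum_le_monomial]. lia.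
Qed.

Lemma Cmod_imaginary (c : R) : Cmod (0, c) = Rabs c.
Proof. unfold Cmod; simpl. rewrite Rmult_0_l, Rplus_0_l, Rmult_1_r. apply sqrt_Rsqr_abs. Qed.

Lemma Cmod_pos_part m' xi t : Cmod (pos_part m' xi t) <= gcoef_l1 m' xi.
Proof.
  eapply Rle_trans; [apply Cmod_sum_n|]. apply sum_Rle. intros i _.
  rewrite Cmod_mult, Cmod_cexpi, Cmod_imaginary, Rabs_Ropp. lra.
Qed.

Lemma Cmod_neg_part m' xi t : Cmod (neg_part m' xi t) <= gcoef_l1 m' xi.
Proof.
  eapply Rle_trans; [apply Cmod_sum_n|]. apply sum_Rle. intros i _.
  rewrite Cmod_mult, Cmod_cexpi, Cmod_imaginary. lra.
Qed.

Lemma Rabs_Im_gplus m' xi t : Rabs (2 * Im_gplus (S m') xi t) <= 2 * gcoef_l1 m' xi.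
Proof.
  rewrite <- Cmod_R, <- pos_neg_part_sum.
  eapply Rle_trans; [apply Cmod_triangle|].
  pose proof (Cmod_pos_part m' xi t). pose proof (Cmod_neg_part m' xi t). lra.
Qed.

Lemma continuous_exp_Im_gplus m xi t : continuity_pt (fun t => exp (2 * Im_gplus m xi t)) t.
Proof.
  assert (HIm : continuity_pt (Im_gplus m xi) t).
  { destruct m as [|m']; [apply continuity_pt_const; intros a b; reflexivity|].
    unfold Im_gplus. induction m' as [|m' IH]; simpl sum_f_R0; [reg|].
    apply (continuity_pt_plus (fun t => sum_f_R0 _ m')); [exact IH | reg]. }
  apply (continuity_pt_comp (fun t => 2 * Im_gplus m xi t) exp).
  - apply (continuity_pt_mult (fun _ => 2)); [apply continuity_pt_const; intros a b; reflexivity | exact HIm].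
  - apply derivable_continuous_pt, derivable_pt_exp.
Qed.

(* Estimate at truncation order M: the low part (a < N) of the Taylor
   polynomial is orthogonal to e^{ikt}; the high part and the Taylor remainder
   are bounded by the tail of the series and by the remainder at 2r. *)
Lemma fourier_coef_truncation_bound m' xi k N M r :
  gcoef_l1 m' xi <= r -> 2 * r <= INR N ->
  (forall a, (a < N)%nat -> (Z.of_nat a * Z.of_nat (S m') <= Z.of_nat k - 1)%Z) ->
  Cmod (fourier_coef (fun t => exp (2 * Im_gplus (S m') xi t)) (Z.of_nat k))
  <= 2 * exp_coef r N * exp r + (exp (2 * r) - exp_partial (2 * r) M).
Proof.
  intros Hl1 HN Hlow.
  set (A := pos_part m' xi). set (B := neg_part m' xi).
  set (low := fun a => (a <? N)%nat).
  assert (HA : forall t, Cmod (A t) <= r) by (intros t; eapply Rle_trans; [apply Cmod_pos_part | exact Hl1]).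
  assert (HB : forall t, Cmod (B t) <= r) by (intros t; eapply Rle_trans; [apply Cmod_neg_part | exact Hl1]).
  assert (Hr : 0 <= r) by (eapply Rle_trans; [apply gcoef_l1_nonneg | exact Hl1]).
  apply (fourier_coef_le _ (fun t => binom_part low (A t) (B t) M));
    [apply continuous_exp_Im_gplus | |].
  - apply (binom_part_spectrum low (Z.of_nat (S m'))); [apply spectrum_pos_part| |].
    + eapply spectrum_le_mono; [|apply spectrum_neg_part]. lia.
    + intros a Ha. apply Hlow, Nat.ltb_lt, Ha.
  - intros t. set (x := 2 * Im_gplus (S m') xi t).
    assert (Hhigh : sum_f_R0 (fun a => if negb (low a) then exp_coef r a else 0) M
                    = sum_f_R0 (fun a => if (N <=? a)%nat then exp_coef r a else 0) M).
    { apply sum_eq. intros a _. unfold low. rewrite Nat.ltb_antisym, Bool.negb_involutive. reflexivity. }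
    rewrite (exp_split_binom_part low (A t) (B t) x M) by apply pos_neg_part_sum.
    eapply Rle_trans; [apply Cmod_triangle|]. apply Rplus_le_compat.
    + eapply Rle_trans; [apply binom_part_bound; [apply HA | apply HB]|].
      cbv beta. rewrite Hhigh. apply Rmult_le_compat_r; [apply Rlt_le, exp_pos|].
      apply exp_coef_tail; assumption.
    + rewrite Cmod_R. apply exp_remainder_bound. unfold x.
      eapply Rle_trans; [apply Rabs_Im_gplus | lra].
Qed.

Lemma le_of_vanishing_excess x y (u : nat -> R) :
  (forall M, x <= y + u M) -> is_lim_seq u 0 -> x <= y.
Proof.
  intros Hle Hu.
  assert (Hlim : is_lim_seq (fun M => y + u M) (y + 0)).
  { apply (is_lim_seq_plus _ _ y 0); [apply is_lim_seq_const | exact Hu | reflexivity]. }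
  rewrite <- (Rplus_0_r y).
  exact (is_lim_seq_le (fun _ => x) _ x (y + 0) Hle (is_lim_seq_const x) Hlim).
Qed.

Lemma ceil_div_spec k m : (1 <= m)%nat ->
  (k <= ceil_div k m * m)%nat /\ (ceil_div k m * m <= k + m - 1)%nat.
Proof.
  intros Hm. unfold ceil_div.
  pose proof (Nat.div_mod_eq (k + m - 1) m). pose proof (Nat.mod_upper_bound (k + m - 1) m ltac:(lia)).
  lia.
Qed.

Theorem lemma2p2 (m : nat) (xi : nat -> R) (k : nat) :
  (1 <= m)%nat ->
  (1 <= k)%nat ->
  INR k >= 2 * INR m * (sqrt (ln (INR m) + 1) * xi_norm m xi) ->
  Cmod (fourier_coef (fun theta => exp (2 * Im_gplus m xi theta)) (Z.of_nat k))
  <= 2 * exp (sqrt (ln (INR m) + 1) * xi_norm m xi)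
       * (sqrt (ln (INR m) + 1) * xi_norm m xi) ^ (ceil_div k m)
       / INR (fact (ceil_div k m)).
Proof.
  intros Hm _ Hk_large.
  destruct (ceil_div_spec k m Hm) as [Hk_le Hk_ge].
  destruct m as [|m']; [lia|].
  set (rho := sqrt (ln (INR (S m')) + 1) * xi_norm (S m') xi) in *.
  set (N := ceil_div k (S m')) in *.
  pose proof (gcoef_l1_bound m' xi) as Hl1. fold rho in Hl1.
  assert (HN : 2 * rho <= INR N).
  { apply le_INR in Hk_le. rewrite mult_INR in Hk_le.
    assert (0 < INR (S m')) by (apply lt_0_INR; lia). nra. }
  assert (Hlow : forall a, (a < N)%nat -> (Z.of_nat a * Z.of_nat (S m') <= Z.of_nat k - 1)%Z).
  { intros a Ha. assert (a * S m' + S m' <= N * S m')%nat by nia. lia. }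
  replace (2 * exp rho * rho ^ N / INR (fact N)) with (2 * exp_coef rho N * exp rho)
    by (unfold exp_coef, Rdiv; ring).
  apply (le_of_vanishing_excess _ _ _ (fun M => fourier_coef_truncation_bound m' xi k N M rho Hl1 HN Hlow)).
  apply exp_remainder_lim.
Qed.
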